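(* For all $U,V\in\mathcal{U}(d)$, $|H_2(U)-H_2(V)|\le\frac{4\pi}{\sqrt d}\|U-V\|_F$; that is, $H_2$ is Lipschitz on $\mathcal{U}(d)$ with respect to the Hilbert–Schmidt norm with Lipschitz constant at most $4\pi/\sqrt d$.
   Context: On $\mathbb{C}^{d_L}$ let $Z|k\rangle=\omega^k|k\rangle$, $X|k\rangle=|k+1\rangle$ (mod $d_L$), $\omega=e^{2\pi i/d_L}$, $\tau=-e^{i\pi/d_L}$, $D_{(a_1,a_2)}=\tau^{a_1a_2}X^{a_1}Z^{a_2}$, and for $\mathbf a=\mathbf a_1\oplus\cdots\oplus\mathbf a_n\in\mathbb{Z}_{d_L}^{2n}$ let $D_{\mathbf a}=D_{\mathbf a_1}\otimes\cdots\otimes D_{\mathbf a_n}$ acting on $\mathbb{C}^d$, $d=d_L^n$. The 2-Clifford entropy of a unitary $U$ is $H_2(U)=1-\frac{1}{d^6}\sum_{\mathbf a,\mathbf b}\big|\operatorname{tr}(D_{\mathbf a}^\dagger UD_{\mathbf b}U^\dagger)\big|^4$. $\|A\|_F=\sqrt{\operatorname{tr}(A^\dagger A)}$. *)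

From HB Require Import structures.
From mathcomp Require Import all_boot all_order all_algebra.
From mathcomp Require Import reals trigo.
From mathcomp Require Import complex.
Set Implicit Arguments. Unset Strict Implicit. Unset Printing Implicit Defensive.
Import Order.TTheory GRing.Theory Num.Theory.
Local Open Scope ring_scope.
Local Open Scope complex_scope.

Section Defs.
Variable R : realType.
Local Notation C := R[i].

Definition expi (x : R) : C := cos x +i* sin x.

Definition cabs (z : C) : R := Num.sqrt (complex.Re z ^+ 2 + complex.Im z ^+ 2).

Definition adj m n (A : 'M[C]_(m, n)) : 'M[C]_(n, m) :=
  \matrix_(i, j) (A j i)^*.

Definition unitary_mx d (U : 'M[C]_d) : Prop := U *m adj U = 1%:M.

(* Frobenius / Hilbert-Schmidt norm  sqrt(tr(A^dagger A)) (the trace is real) *)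
Definition frob m n (A : 'M[C]_(m, n)) : R := Num.sqrt (complex.Re (\tr (adj A *m A))).

Variable dL : nat.

Definition omega : C := expi (2 * pi / dL%:R).
Definition tau : C := - expi (pi / dL%:R).

Definition Xmx : 'M[C]_dL := \matrix_(i, j) ((i : nat) == (j + 1) %% dL)%N%:R.
Definition Zmx : 'M[C]_dL := \matrix_(i, j) (((i : nat) == j)%:R * omega ^+ j).

(* D_{(a1,a2)} = tau^{a1 a2} X^{a1} Z^{a2}, with a1, a2 in Z_dL represented by
   their representatives in {0, ..., dL-1} *)
Definition D1 (a : 'I_dL * 'I_dL) : 'M[C]_dL :=
  tau ^+ (a.1 * a.2)%N *: (Xmx ^+ a.1 *m Zmx ^+ a.2).

(* n qudits: computational basis of (C^dL)^{\otimes n} indexed by n-tuples *)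
Definition qidx (n : nat) := {ffun 'I_n -> 'I_dL}.
Definition qdim (n : nat) := #|qidx n|.

(* D_a = D_{a_1} (x) ... (x) D_{a_n}, a in Z_dL^{2n} *)
Definition Dn n (a : {ffun 'I_n -> 'I_dL * 'I_dL}) : 'M[C]_(qdim n) :=
  \matrix_(i, j) \prod_(k < n)
     D1 (a k) ((enum_val i : qidx n) k) ((enum_val j : qidx n) k).

Definition H2 n (U : 'M[C]_(qdim n)) : R :=
  1 - ((qdim n)%:R ^+ 6)^-1 *
    \sum_(a : {ffun 'I_n -> 'I_dL * 'I_dL})
    \sum_(b : {ffun 'I_n -> 'I_dL * 'I_dL})
      cabs (\tr (adj (Dn a) *m U *m Dn b *m adj U)) ^+ 4.

End Defs.

(* The Weyl operators satisfy the completeness relation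
   [\sum_a conj (D_a)_(l,i) (D_a)_(l',i') = d [l = l'] [i = i']] (a character sum over Z_dL,
   tensored over the n qudits), hence Parseval: [\sum_a |tr (D_a^* Q)|^2 = d ||Q||_F^2].
   For [Q = U D_b U^*], which is unitary, this bounds every coefficient
   [c_ab(U) = |tr (D_a^* U D_b U^* )|] by d and gives [\sum_a c_ab(U)^2 = d^2]; for
   [Q = U D_b U^* - V D_b V^* = (U - V) D_b U^* + V D_b (U - V)^*] it gives
   [|c_ab(U) - c_ab(V)| <= 2 sqrt d ||U - V||_F]. Since [x^4 - y^4 = (x - y)(x + y)(x^2 + y^2)],
   [\sum_a |c_ab(U)^4 - c_ab(V)^4| <= 8 d^3 sqrt d ||U - V||_F]; summing over the d^2 labels b
   and dividing by d^6 yields [|H_2(U) - H_2(V)| <= 8 ||U - V||_F / sqrt d], and [8 <= 4 pi]. *)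
From HB Require Import structures.
From mathcomp Require Import all_boot all_order all_algebra.
From mathcomp Require Import reals trigo.
From mathcomp Require Import complex.
From mathcomp Require Import ring lra.
Set Implicit Arguments. Unset Strict Implicit. Unset Printing Implicit Defensive.
Import Order.TTheory GRing.Theory Num.Theory.
Local Open Scope complex_scope.
Local Open Scope ring_scope.

Section ComplexModulus.
Variable R : realType.
Local Notation C := R[i].

Lemma cabsE (z : C) : (cabs z)%:C = `|z|.
Proof. by rewrite normc_def. Qed.

Lemma cabs_ge0 (z : C) : 0 <= cabs z.
Proof. exact: sqrtr_ge0. Qed.

Lemma cabs_sqr (z : C) : (cabs z ^+ 2)%:C = z * z^*.
Proof. by rewrite rmorphXn /= cabsE sqr_normc. Qed.

Lemma cabsD (x y : C) : cabs (x + y) <= cabs x + cabs y.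
Proof. by rewrite -lecR rmorphD /= !cabsE ler_normD. Qed.

Lemma cabsB (x y : C) : cabs (x - y) = cabs (y - x).
Proof. by apply: complexI; rewrite !cabsE distrC. Qed.

Lemma cabs_dist (x y : C) : `|cabs x - cabs y| <= cabs (x - y).
Proof.
have := cabsD (x - y) y; have := cabsD (y - x) x.
rewrite !subrK cabsB => hy hx.
by rewrite ler_distl; apply/andP; split; lra.
Qed.

Lemma cabs_sqrD (x y : C) : cabs (x + y) ^+ 2 <= 2 * cabs x ^+ 2 + 2 * cabs y ^+ 2.
Proof.
have hx := cabs_ge0 x; have hy := cabs_ge0 y.
apply: le_trans (_ : _ <= (cabs x + cabs y) ^+ 2) _.
  by rewrite ler_pXn2r ?nnegrE ?cabs_ge0 ?addr_ge0 ?cabsD.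
by have := sqr_ge0 (cabs x - cabs y); rewrite !expr2; nra.
Qed.

End ComplexModulus.

Lemma dist_expr4_le (R : realDomainType) (x y D e : R) :
  0 <= x -> 0 <= y -> x <= D -> y <= D -> `|x - y| <= e ->
  `|x ^+ 4 - y ^+ 4| <= 2 * D * (x ^+ 2 + y ^+ 2) * e.
Proof.
move=> x_ge0 y_ge0 x_le y_le dist_le.
have -> : x ^+ 4 - y ^+ 4 = (x - y) * ((x + y) * (x ^+ 2 + y ^+ 2)) by ring.
have sq_ge0 : 0 <= x ^+ 2 + y ^+ 2 by rewrite addr_ge0 ?sqr_ge0.
have sum_ge0 : 0 <= (x + y) * (x ^+ 2 + y ^+ 2) by rewrite mulr_ge0 // addr_ge0.
rewrite normrM (ger0_norm sum_ge0) mulrC ler_pM //.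
by rewrite ler_wpM2r //; lra.
Qed.

Lemma sum_expr_unity_root (F : idomainType) (N : nat) (z : F) :
  N.-unity_root z -> z != 1 -> \sum_(k < N) z ^+ k = 0.
Proof.
rewrite unity_rootE => /eqP zN z_neq1; apply/eqP.
by have := subrX1 z N; rewrite zN subrr => /esym/eqP; rewrite mulf_eq0 subr_eq0 (negbTE z_neq1).
Qed.

Lemma sum_mul_delta (S : pzSemiRingType) (T : finType) (F : T -> S) (t : T) :
  \sum_s F s * (s == t)%:R = F t.
Proof.
by rewrite (bigD1 t) //= eqxx mulr1 big1 ?addr0 // => s /negbTE ->; rewrite mulr0.
Qed.

Lemma sum_mul_delta_nat (S : pzSemiRingType) n (F : 'I_n -> S) k (k_lt : (k < n)%N) :
  \sum_(i < n) F i * ((i : nat) == k)%N%:R = F (Ordinal k_lt).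
Proof. exact: (sum_mul_delta F (Ordinal k_lt)). Qed.

Section UnitCircle.
Variable R : realType.
Local Notation C := R[i].

Lemma expiD (x y : R) : expi x * expi y = expi (x + y).
Proof.
rewrite /expi sinD cosD; simpc; apply/eqP; rewrite eq_complex /=.
by apply/andP; split; apply/eqP; ring.
Qed.

Lemma expiMn (x : R) m : expi x ^+ m = expi (x *+ m).
Proof.
elim: m => [|m IH]; first by rewrite mulr0n /expi cos0 sin0.
by rewrite exprS IH expiD mulrS.
Qed.

Lemma expiJ (x : R) : (expi x)^* * expi x = 1.
Proof.
rewrite /expi; simpc; apply/eqP; rewrite eq_complex /= -!expr2 cos2Dsin2.
by apply/andP; split; apply/eqP; ring.
Qed.

Lemma expi_neq1 (x : R) : 0 < x < pi *+ 2 -> expi x != 1.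
Proof.
move=> /andP[x_gt0 x_lt2pi]; apply/negP => /eqP[cos_x _].
have half_gt0 : 0 < sin (x / 2).
  by apply: sin_gt0_pi; rewrite divr_gt0 //= ltr_pdivrMr // mulr_natr.
have := cos2Dsin2 (x / 2); have := cos_mulr2n (x / 2).
rewrite -[x / 2 *+ 2]mulr_natr divfK ?pnatr_eq0 // cos_x => h1 h2.
have : sin (x / 2) ^+ 2 = 0 by rewrite expr2 in h2 *; nra.
by move/eqP; rewrite sqrf_eq0 gt_eqF.
Qed.

Lemma conjCX (z : C) k : (z ^+ k)^* = z^* ^+ k.
Proof. exact: rmorphXn. Qed.

Lemma unimodularX (z : C) k : z^* * z = 1 -> (z ^+ k)^* * z ^+ k = 1.
Proof. by move=> zJ; rewrite conjCX -exprMn zJ expr1n. Qed.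

End UnitCircle.

Section AdjointFrobenius.
Variable R : realType.
Local Notation C := R[i].

Lemma adjE m n (A : 'M[C]_(m, n)) i j : adj A i j = (A j i)^*.
Proof. by rewrite mxE. Qed.

Lemma adjK m n (A : 'M[C]_(m, n)) : adj (adj A) = A.
Proof. by apply/matrixP => i j; rewrite !adjE conjCK. Qed.

Lemma adjB m n (A B : 'M[C]_(m, n)) : adj (A - B) = adj A - adj B.
Proof. by apply/matrixP => i j; rewrite !(adjE, mxE) rmorphB. Qed.

Lemma adjM m n p (A : 'M[C]_(m, n)) (B : 'M[C]_(n, p)) : adj (A *m B) = adj B *m adj A.
Proof.
apply/matrixP => i j; rewrite adjE !mxE rmorph_sum; apply: eq_bigr => k _.
by rewrite !adjE rmorphM mulrC.
Qed.

Lemma mxtrace_adjME m n (A B : 'M[C]_(m, n)) :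
  \tr (adj A *m B) = \sum_i \sum_j (A j i)^* * B j i.
Proof. by apply: eq_bigr => i _; rewrite mxE; apply: eq_bigr => j _; rewrite adjE. Qed.

Lemma mxtrace_adj n (A : 'M[C]_n) : \tr (adj A) = (\tr A)^*.
Proof. by rewrite rmorph_sum; apply: eq_bigr => i _; rewrite adjE. Qed.

Lemma conj_mxtrace_adjM m n (A B : 'M[C]_(m, n)) : (\tr (adj A *m B))^* = \tr (adj B *m A).
Proof. by rewrite -mxtrace_adj adjM adjK. Qed.

Lemma unitary_mxC n (U : 'M[C]_n) : unitary_mx U -> adj U *m U = 1%:M.
Proof. exact: mulmx1C. Qed.

Lemma unitary_mx_adj n (U : 'M[C]_n) : unitary_mx U -> unitary_mx (adj U).
Proof. by move=> /unitary_mxC; rewrite /unitary_mx adjK. Qed.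

Lemma unitary_mxM n (U V : 'M[C]_n) : unitary_mx U -> unitary_mx V -> unitary_mx (U *m V).
Proof.
by move=> hU hV; rewrite /unitary_mx adjM mulmxA -[U *m V *m _]mulmxA hV mulmx1.
Qed.

Definition frob2 m n (A : 'M[C]_(m, n)) : R := complex.Re (\tr (adj A *m A)).

Lemma frobE m n (A : 'M[C]_(m, n)) : frob A = Num.sqrt (frob2 A).
Proof. by []. Qed.

Lemma mxtrace_adjM_self m n (A : 'M[C]_(m, n)) :
  \tr (adj A *m A) = (\sum_i \sum_j cabs (A j i) ^+ 2)%:C.
Proof.
rewrite rmorph_sum; apply: eq_bigr => i _; rewrite mxE rmorph_sum.
by apply: eq_bigr => j _; rewrite adjE mulrC -cabs_sqr.
Qed.

Lemma frob2E m n (A : 'M[C]_(m, n)) : frob2 A = \sum_i \sum_j cabs (A j i) ^+ 2.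
Proof. by rewrite /frob2 mxtrace_adjM_self. Qed.

Lemma frob2_mxtrace m n (A : 'M[C]_(m, n)) : (frob2 A)%:C = \tr (adj A *m A).
Proof. by rewrite frob2E mxtrace_adjM_self. Qed.

Lemma frob2_ge0 m n (A : 'M[C]_(m, n)) : 0 <= frob2 A.
Proof. by rewrite frob2E; do 2![apply: sumr_ge0 => ? _]; rewrite sqr_ge0. Qed.

Lemma frob2D m n (A B : 'M[C]_(m, n)) :
  frob2 (A + B) <= 2 * frob2 A + 2 * frob2 B.
Proof.
rewrite !frob2E !mulr_sumr -big_split; apply: ler_sum => i _.
rewrite !mulr_sumr -big_split; apply: ler_sum => j _.
by rewrite mxE cabs_sqrD.
Qed.

Lemma frob2_adj n (A : 'M[C]_n) : frob2 (adj A) = frob2 A.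
Proof. by rewrite /frob2 adjK mxtrace_mulC. Qed.

Lemma frob2_mulmx_unitary n (A U : 'M[C]_n) : unitary_mx U -> frob2 (A *m U) = frob2 A.
Proof.
move=> hU; rewrite /frob2 adjM mxtrace_mulC !mulmxA -[_ *m adj U]mulmxA hU mulmx1.
by rewrite mxtrace_mulC.
Qed.

Lemma frob2_unitary_mulmx n (U A : 'M[C]_n) : unitary_mx U -> frob2 (U *m A) = frob2 A.
Proof. by move=> /unitary_mxC hU; rewrite /frob2 adjM -mulmxA [adj U *m _]mulmxA hU mul1mx. Qed.

Lemma frob2_unitary n (U : 'M[C]_n) : unitary_mx U -> frob2 U = n%:R.
Proof.
by move=> /unitary_mxC hU; apply: complexI; rewrite frob2_mxtrace hU mxtrace1 rmorph_nat.
Qed.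
End AdjointFrobenius.

Section Completeness.
Variables (R : realType) (I : finType) (m : nat).
Local Notation C := R[i].

(* Entrywise form of [\sum_a |E_a>><<E_a| = c Id] on vectorised m x m matrices, i.e. the
   [E_a / sqrt c] form a tight frame for the Hilbert-Schmidt inner product. *)
Definition mx_completeness (E : I -> 'M[C]_m) (c : C) :=
  forall j i j' i', \sum_a (E a j i)^* * E a j' i' = c * (j == j')%:R * (i == i')%:R.

Variables (E : I -> 'M[C]_m) (c : C).
Hypothesis E_complete : mx_completeness E c.

Lemma completeness_expansion (M : 'M[C]_m) : \sum_a \tr (adj (E a) *m M) *: E a = c *: M.
Proof.
apply/matrixP => j' i'; rewrite summxE mxE.
under eq_bigr => a _ do rewrite mxE mxtrace_adjME mulr_suml.
under eq_bigr => a _ do under eq_bigr => i _ do rewrite mulr_suml.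
rewrite exchange_big; under eq_bigr => i _ do rewrite exchange_big.
have inner i j : \sum_a (E a j i)^* * M j i * E a j' i' = c * M j i * (i == i')%:R * (j == j')%:R.
  transitivity (M j i * (c * (j == j')%:R * (i == i')%:R)); last by ring.
  by rewrite -E_complete mulr_sumr; apply: eq_bigr => a _; ring.
under eq_bigr => i _ do rewrite (eq_bigr _ (fun j _ => inner i j)) sum_mul_delta.
by rewrite sum_mul_delta.
Qed.

Lemma completeness_parseval (M : 'M[C]_m) :
  \sum_a \tr (adj (E a) *m M) * (\tr (adj (E a) *m M))^* = c * \tr (adj M *m M).
Proof.
rewrite -mxtraceZ scalemxAr -completeness_expansion mulmx_sumr raddf_sum.
by apply: eq_bigr => a _ /=; rewrite -scalemxAr mxtraceZ conj_mxtrace_adjM.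
Qed.
End Completeness.

Section SingleQudit.
Variables (R : realType) (dL : nat).
Hypothesis dL_gt0 : (0 < dL)%N.
Local Notation C := R[i].
Local Notation omega := (omega R dL).

Lemma omega_prim : dL.-primitive_root omega.
Proof.
have dL_neq0 : dL%:R != 0 :> R by rewrite pnatr_eq0 -lt0n.
apply/andP; split => //; apply/forallP => k; rewrite unity_rootE /omega expiMn.
have [->|k_lt] := eqVneq k.+1 dL.
  by rewrite -[_ *+ dL]mulr_natr divfK // mulr_natl /expi cos2pi sin2pi eqxx.
have k1_lt : (k.+1 < dL)%N by rewrite ltn_neqAle k_lt ltn_ord.
have -> : 2 * pi / dL%:R *+ k.+1 = pi *+ 2 * (k.+1%:R / dL%:R) :> R.
  by rewrite -[_ *+ k.+1]mulr_natr -[pi *+ 2]mulr_natr; field.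
have ratio_lt1 : k.+1%:R / dL%:R < 1 :> R by rewrite ltr_pdivrMr ?ltr0n // mul1r ltr_nat.
have pi2_gt0 : 0 < pi *+ 2 :> R by rewrite mulrn_wgt0 ?pi_gt0.
apply/eqP/negbTE/expi_neq1; rewrite mulr_gt0 ?divr_gt0 ?ltr0n //=.
by rewrite -[X in _ < X]mulr1 ltr_pM2l.
Qed.

Lemma omegaJ : omega^* * omega = 1.
Proof. exact: expiJ. Qed.

Lemma tauJ : (tau R dL)^* * tau R dL = 1.
Proof. by rewrite /tau rmorphN mulrNN expiJ. Qed.

Lemma sum_omega_char (i i' : 'I_dL) :
  \sum_(k < dL) ((omega ^+ i) ^+ k)^* * (omega ^+ i') ^+ k = dL%:R * (i == i')%:R.
Proof.
under eq_bigr do rewrite conjCX -exprMn.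
have [<-|ne] := eqVneq i i'.
  rewrite (unimodularX i omegaJ).
  under eq_bigr do rewrite expr1n.
  by rewrite sumr_const card_ord mulr1.
set z := (omega ^+ i)^* * omega ^+ i'.
rewrite mulr0; apply: sum_expr_unity_root.
  rewrite unity_rootE /z exprMn -conjCX !(exprAC _ _ dL) (prim_expr_order omega_prim).
  by rewrite !expr1n conjC1 mulr1.
apply: contra ne => /eqP z1.
have : omega ^+ i * z == omega ^+ i'.
  by rewrite /z mulrA [_ * _^*]mulrC (unimodularX i omegaJ) mul1r.
by rewrite z1 mulr1 (eq_prim_root_expr omega_prim) !modn_small.
Qed.

Lemma XmxX m : Xmx R dL ^+ m = \matrix_(i, j) ((i : nat) == (j + m) %% dL)%N%:R.
Proof.
elim: m => [|m IHm]; apply/matrixP => i j; first by rewrite expr0 !mxE addn0 modn_small.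
rewrite exprSr -mulmxE IHm !mxE.
under eq_bigr do rewrite !mxE.
by rewrite (sum_mul_delta_nat _ (ltn_pmod _ dL_gt0)) /= modnDml addnAC addn1 addnS.
Qed.

Lemma ZmxX m : Zmx R dL ^+ m = \matrix_(i, j) ((i == j)%:R * (omega ^+ j) ^+ m).
Proof.
elim: m => [|m IHm]; apply/matrixP => i j; first by rewrite expr0 !mxE expr0 mulr1.
rewrite exprSr -mulmxE IHm !mxE.
under eq_bigr do rewrite !mxE mulrCA mulrC.
by rewrite sum_mul_delta -mulrA -exprSr.
Qed.

Lemma D1E (a : 'I_dL * 'I_dL) (i j : 'I_dL) :
  D1 R a i j =
  tau R dL ^+ (a.1 * a.2) * ((i : nat) == (j + a.1) %% dL)%N%:R * (omega ^+ j) ^+ a.2.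
Proof.
rewrite /D1 !mxE XmxX ZmxX -mulrA; congr (_ * _).
under eq_bigr do rewrite !mxE mulrCA mulrC.
by rewrite sum_mul_delta.
Qed.

Lemma D1_conjM (a : 'I_dL * 'I_dL) (l i l' i' : 'I_dL) :
  (D1 R a l i)^* * D1 R a l' i' =
  ((l : nat) == (i + a.1) %% dL)%N%:R * ((l' : nat) == (i' + a.1) %% dL)%N%:R *
  (((omega ^+ i) ^+ a.2)^* * (omega ^+ i') ^+ a.2).
Proof.
rewrite !D1E !rmorphM /= conjC_nat -[RHS]mul1r -(unimodularX (a.1 * a.2)%N tauJ).
ring.
Qed.

Lemma adjD1_mul (a : 'I_dL * 'I_dL) : adj (D1 R a) *m D1 R a = 1%:M.
Proof.
apply/matrixP => i i'; rewrite !mxE.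
under eq_bigr do rewrite adjE D1_conjM -mulrA mulrC.
rewrite (sum_mul_delta_nat _ (ltn_pmod _ dL_gt0)) /= eqn_modDr !modn_small // val_eqE.
have [<-|_] := eqVneq i i'; last by rewrite mul0r.
by rewrite (unimodularX _ (unimodularX _ omegaJ)) mulr1.
Qed.

Lemma sum_shift_delta (l i : 'I_dL) :
  \sum_(a < dL) ((l : nat) == (i + a) %% dL)%N%:R = 1 :> C.
Proof.
pose h (a : 'I_dL) : 'I_dL := Ordinal (ltn_pmod (i + a) dL_gt0).
have h_inj : injective h.
  move=> a b /(congr1 val) /eqP /=; rewrite eqn_modDl !modn_small // => /eqP; exact: val_inj.
transitivity (\sum_(b < dL) ((l : nat) == b)%N%:R : C).
  by rewrite [RHS](reindex_inj h_inj).
under eq_bigr do rewrite eq_sym -[_%:R]mul1r.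
exact: sum_mul_delta_nat.
Qed.

Lemma D1_completeness : mx_completeness (@D1 R dL) dL%:R.
Proof.
move=> l i l' i'.
transitivity (\sum_(a1 < dL) \sum_(a2 < dL) (D1 R (a1, a2) l i)^* * D1 R (a1, a2) l' i').
  by rewrite pair_big; apply: eq_bigr => -[].
under eq_bigr => a1 _ do under eq_bigr => a2 _ do rewrite D1_conjM /=.
under eq_bigr => a1 _ do rewrite -mulr_sumr sum_omega_char //.
have [<-|_] := eqVneq i i'; last by rewrite big1 ?mulr0 // => a1 _; rewrite mulr0.
have same_shift (a1 : 'I_dL) :
    ((l : nat) == (i + a1) %% dL)%N%:R * ((l' : nat) == (i + a1) %% dL)%N%:R =
    (l == l')%:R * ((l : nat) == (i + a1) %% dL)%N%:R :> C.
  have [e|_] := eqVneq (l : nat) ((i + a1) %% dL)%N; last by rewrite mul0r mulr0.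
  by rewrite -e mul1r mulr1 -val_eqE eq_sym.
under eq_bigr do rewrite same_shift.
by rewrite -mulr_suml -mulr_sumr sum_shift_delta; ring.
Qed.
End SingleQudit.

Section TensorFamily.
Variables (R : realType) (dL n : nat) (A : finType).
Local Notation C := R[i].
Local Notation T := (qidx dL n).
Local Notation d := (qdim dL n).
Local Notation ev i := (enum_val i : T).

Definition tensor_mx (E : A -> 'M[C]_dL) (a : {ffun 'I_n -> A}) : 'M[C]_d :=
  \matrix_(i, j) \prod_k E (a k) (ev i k) (ev j k).

Lemma prod_enum_val_eq (i j : 'I_d) : \prod_k ((ev i k == ev j k)%:R : C) = (i == j)%:R.
Proof.
have [<-|ne] := eqVneq i j; first by rewrite big1 // => k _; rewrite eqxx.
have /existsP [k ne_k] : [exists k, ev i k != ev j k].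
  apply: contraR ne; rewrite negb_exists => /forallP eq_k.
  by apply/eqP/enum_val_inj/ffunP => k; apply/eqP/negPn.
by rewrite (bigD1 k) //= (negbTE ne_k) mul0r.
Qed.

Lemma sum_enum_val_prod (F : 'I_n -> 'I_dL -> C) :
  \sum_(l < d) \prod_k F k (ev l k) = \prod_k \sum_t F k t.
Proof.
rewrite bigA_distr_bigA (reindex (@enum_rank T)) /=; last exact/onW_bij/enum_rank_bij.
by apply: eq_bigr => f _; rewrite enum_rankK.
Qed.

Variable E : A -> 'M[C]_dL.

Lemma tensor_adj_mul (a : {ffun 'I_n -> A}) :
  (forall x, adj (E x) *m E x = 1%:M) -> adj (tensor_mx E a) *m tensor_mx E a = 1%:M.
Proof.
move=> E_unitary; apply/matrixP => i i'; rewrite !mxE.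
have E_cols x j j' : \sum_t (E x t j)^* * E x t j' = (j == j')%:R.
  move: (E_unitary x) => /matrixP/(_ j j'); rewrite !mxE => <-.
  by apply: eq_bigr => t _; rewrite adjE.
under eq_bigr do rewrite adjE !mxE rmorph_prod -big_split /=.
rewrite (sum_enum_val_prod (fun k t => (E (a k) t (ev i k))^* * E (a k) t (ev i' k))).
under eq_bigr do rewrite E_cols.
by rewrite prod_enum_val_eq.
Qed.

Lemma tensor_completeness (c : C) :
  mx_completeness E c -> mx_completeness (tensor_mx E) (c ^+ n).
Proof.
move=> E_complete l i l' i'.
under eq_bigr do rewrite !mxE rmorph_prod -big_split /=.
rewrite -(bigA_distr_bigA (fun k x => (E x (ev l k) (ev i k))^* * E x (ev l' k) (ev i' k))) /=.
under eq_bigr do rewrite E_complete.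
by rewrite !big_split /= !prod_enum_val_eq prodr_const card_ord.
Qed.
End TensorFamily.

Lemma Dn_tensor (R : realType) (dL n : nat) (a : {ffun 'I_n -> 'I_dL * 'I_dL}) :
  Dn R a = tensor_mx (@D1 R dL) a.
Proof. by []. Qed.

Section WeylBounds.
Variables (R : realType) (dL n : nat).
Hypothesis dL_gt0 : (0 < dL)%N.
Local Notation C := R[i].
Local Notation d := (qdim dL n).
Local Notation W := {ffun 'I_n -> 'I_dL * 'I_dL}.
Local Notation D := (@Dn R dL n).

Lemma qdimE : d = (dL ^ n)%N.
Proof. by rewrite /qdim card_ffun !card_ord. Qed.

Lemma card_weyl_labels : #|W| = (d * d)%N.
Proof. by rewrite card_ffun card_prod !card_ord qdimE expnMn. Qed.

Lemma qdim_gt0 : (0 < d)%N.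
Proof. by rewrite qdimE expn_gt0 dL_gt0. Qed.

Lemma Dn_completeness : mx_completeness D d%:R.
Proof.
by move: (tensor_completeness (n := n) (@D1_completeness R dL dL_gt0)); rewrite -natrX -qdimE.
Qed.

Lemma Dn_unitary (b : W) : unitary_mx (D b).
Proof. by apply: mulmx1C; rewrite Dn_tensor tensor_adj_mul // => x; exact: adjD1_mul. Qed.

Lemma weyl_parseval (Q : 'M[C]_d) :
  \sum_a cabs (\tr (adj (D a) *m Q)) ^+ 2 = d%:R * frob2 Q.
Proof.
apply: complexI; rewrite rmorph_sum rmorphM rmorph_nat /= frob2_mxtrace.
by rewrite -(completeness_parseval Dn_completeness); apply: eq_bigr => a _; rewrite cabs_sqr.
Qed.

Lemma weyl_coef_sqr_le (Q : 'M[C]_d) a :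
  cabs (\tr (adj (D a) *m Q)) ^+ 2 <= d%:R * frob2 Q.
Proof.
rewrite -weyl_parseval (bigD1 a) //= lerDl.
by apply: sumr_ge0 => b _; rewrite sqr_ge0.
Qed.

Lemma frob2_conj_weyl (U : 'M[C]_d) b : unitary_mx U -> frob2 (U *m D b *m adj U) = d%:R.
Proof.
move=> hU; apply/frob2_unitary/unitary_mxM; last exact: unitary_mx_adj.
exact: unitary_mxM hU (Dn_unitary b).
Qed.

Lemma frob2_conj_weyl_sub (U V : 'M[C]_d) b : unitary_mx U -> unitary_mx V ->
  frob2 (U *m D b *m adj U - V *m D b *m adj V) <= 4 * frob2 (U - V).
Proof.
move=> hU hV.
have -> : U *m D b *m adj U - V *m D b *m adj V =
    (U - V) *m (D b *m adj U) + V *m (D b *m adj (U - V)).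
  by rewrite adjB !mulmxBl !mulmxBr !mulmxA addrA subrK.
apply: le_trans (frob2D _ _) _.
rewrite (frob2_mulmx_unitary _ (unitary_mxM (Dn_unitary b) (unitary_mx_adj hU))).
rewrite (frob2_unitary_mulmx _ hV) (frob2_unitary_mulmx _ (Dn_unitary b)) frob2_adj.
lra.
Qed.

Definition weyl_coef (U : 'M[C]_d) a b : R := cabs (\tr (adj (D a) *m U *m D b *m adj U)).

Lemma weyl_coefE (U : 'M[C]_d) a b :
  weyl_coef U a b = cabs (\tr (adj (D a) *m (U *m D b *m adj U))).
Proof. by rewrite /weyl_coef !mulmxA. Qed.

Lemma H2E (U : 'M[C]_d) :
  H2 U = 1 - (d%:R ^+ 6)^-1 * \sum_a \sum_b weyl_coef U a b ^+ 4.
Proof. by []. Qed.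

Lemma weyl_coef_le (U : 'M[C]_d) a b : unitary_mx U -> weyl_coef U a b <= d%:R.
Proof.
move=> hU; rewrite weyl_coefE -(ler_pXn2r (n := 2)) ?nnegrE ?cabs_ge0 ?ler0n //.
by rewrite [X in _ <= X]expr2 -[X in _ * X](frob2_conj_weyl b hU) weyl_coef_sqr_le.
Qed.

Lemma weyl_coef_dist (U V : 'M[C]_d) a b : unitary_mx U -> unitary_mx V ->
  `|weyl_coef U a b - weyl_coef V a b| <= 2 * Num.sqrt d%:R * frob (U - V).
Proof.
move=> hU hV; rewrite !weyl_coefE; apply: le_trans (cabs_dist _ _) _.
rewrite -raddfB -mulmxBr /= -(ler_pXn2r (n := 2)) ?nnegrE ?cabs_ge0 ?mulr_ge0 ?sqrtr_ge0 //.
rewrite frobE !exprMn (sqr_sqrtr (ler0n _ _)) (sqr_sqrtr (frob2_ge0 _)).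
apply: le_trans (weyl_coef_sqr_le _ _) _.
rewrite [2 ^+ 2 * _]mulrC -mulrA ler_wpM2l ?ler0n //.
have -> : 2 ^+ 2 = 4 :> R by rewrite expr2; lra.
exact: frob2_conj_weyl_sub.
Qed.

Lemma sum_weyl_coef_sqr (U : 'M[C]_d) b : unitary_mx U ->
  \sum_a weyl_coef U a b ^+ 2 = d%:R ^+ 2.
Proof.
move=> hU; under eq_bigr do rewrite weyl_coefE.
by rewrite weyl_parseval frob2_conj_weyl // expr2.
Qed.

Lemma sum_weyl_coef4_dist (U V : 'M[C]_d) b : unitary_mx U -> unitary_mx V ->
  \sum_a `|weyl_coef U a b ^+ 4 - weyl_coef V a b ^+ 4| <=
  4 * d%:R ^+ 3 * (2 * Num.sqrt d%:R * frob (U - V)).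
Proof.
move=> hU hV; set e := 2 * _ * _.
have coef_dist a : `|weyl_coef U a b ^+ 4 - weyl_coef V a b ^+ 4| <=
    2 * d%:R * (weyl_coef U a b ^+ 2 + weyl_coef V a b ^+ 2) * e.
  exact: dist_expr4_le (cabs_ge0 _) (cabs_ge0 _) (weyl_coef_le a b hU) (weyl_coef_le a b hV)
    (weyl_coef_dist a b hU hV).
apply: le_trans (ler_sum _ (fun a _ => coef_dist a)) _.
rewrite -mulr_suml -mulr_sumr big_split /= !sum_weyl_coef_sqr //.
by rewrite le_eqVlt; apply: predU1l; ring.
Qed.

Lemma H2_dist_le (U V : 'M[C]_d) : unitary_mx U -> unitary_mx V ->
  `|H2 U - H2 V| <= 8 / Num.sqrt d%:R * frob (U - V).
Proof.
move=> hU hV; rewrite !H2E.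
set k := (d%:R ^+ 6)^-1; set e := 2 * Num.sqrt d%:R * frob (U - V).
have k_ge0 : 0 <= k by rewrite invr_ge0 exprn_ge0 ?ler0n.
have -> : forall x y : R, 1 - k * x - (1 - k * y) = k * (y - x) by move=> x y; ring.
rewrite normrM (ger0_norm k_ge0) -sumrB.
under eq_bigr do rewrite -sumrB.
have sum_le : `|\sum_a \sum_b (weyl_coef V a b ^+ 4 - weyl_coef U a b ^+ 4)| <=
    \sum_(b : W) 4 * d%:R ^+ 3 * e.
  apply: le_trans (ler_norm_sum _ _ _) _.
  apply: le_trans (ler_sum _ (fun a _ => ler_norm_sum _ _ _)) _.
  rewrite exchange_big; apply: ler_sum => b _.
  under eq_bigr do rewrite distrC.
  exact: sum_weyl_coef4_dist.
apply: le_trans (ler_wpM2l k_ge0 sum_le) _.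
rewrite sumr_const card_weyl_labels -[_ *+ (d * d)%N]mulr_natr natrM.
pose s := Num.sqrt (d%:R : R).
have s_gt0 : 0 < s by rewrite sqrtr_gt0 ltr0n qdim_gt0.
have d_sqr : d%:R = s ^+ 2 by rewrite sqr_sqrtr ?ler0n.
suff -> : k * (4 * d%:R ^+ 3 * e * (d%:R * d%:R)) = 8 / s * frob (U - V) by [].
by rewrite /k /e -/s d_sqr; field; rewrite gt_eqF.
Qed.
End WeylBounds.

Theorem corollary2 (R : realType) (dL n : nat) (hdL : (1 < dL)%N)
    (U V : 'M[R[i]]_(qdim dL n)) :
  unitary_mx U -> unitary_mx V ->
  `|H2 U - H2 V| <= 4 * pi / Num.sqrt (qdim dL n)%:R * frob (U - V).
Proof.
move=> hU hV; apply: le_trans (H2_dist_le (ltnW hdL) hU hV) _.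
rewrite ler_wpM2r ?frobE ?sqrtr_ge0 // ler_wpM2r ?invr_ge0 ?sqrtr_ge0 //.
by have := @pi_ge2 R; lra.
Qed.
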